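(* Let $(S(t),E(t),I(t),R(t))$ be a solution of the SEIR initial value problem described in the context. If $S(t)>0$ for $t>0$, then \[ R''(t)+(\gamma+\delta)R'(t)=\gamma\delta\Bigl(N-\tilde S e^{(\beta/\gamma)\tilde R}e^{-(\beta/\gamma)R(t)}-R(t)\Bigr)\qquad(t>0). \]
   Context: Let $\beta,\gamma,\delta>0$ be constants and $\tilde S,\tilde E,\tilde I,\tilde R$ real numbers with $N:=\tilde S+\tilde E+\tilde I+\tilde R>0$. The SEIR initial value problem is $S'(t)=-\beta S(t)I(t)$, $E'(t)=\beta S(t)I(t)-\delta E(t)$, $I'(t)=\delta E(t)-\gamma I(t)$, $R'(t)=\gamma I(t)$ for $t>0$, with $S(0)=\tilde S$, $E(0)=\tilde E$, $I(0)=\tilde I$, $R(0)=\tilde R$; a solution is a vector function $(S,E,I,R)$ of class $C^1(0,\infty)\cap C[0,\infty)$ satisfying these. Standing assumptions: (A1) $\tilde I>0$; (A2) $\tilde E>(\gamma/\delta)\tilde I$; (A3) $\tilde S>\delta\tilde E/(\beta\tilde I)$; (A4) $\tilde R\ge 0$ and $N>\tilde S e^{(\beta/\gamma)\tilde R}+\tilde R$. *)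

From Stdlib Require Import Reals.
From Coquelicot Require Import Coquelicot.
Open Scope R_scope.

(* f is of class C^1(0,oo) ∩ C[0,oo): differentiable with continuous
   derivative on (0,oo), and continuous on [0,oo) (right-continuous at 0,
   continuity on (0,oo) following from differentiability). *)
Definition C1_open_C0_closed (f : R -> R) : Prop :=
  (forall t, 0 < t -> ex_derive f t /\ continuous (Derive f) t) /\
  filterlim f (at_right 0) (locally (f 0)).

Definition SEIR_solution (beta gamma delta S0 E0 I0 R0 : R)
    (S E I Rf : R -> R) : Prop :=
  C1_open_C0_closed S /\ C1_open_C0_closed E /\
  C1_open_C0_closed I /\ C1_open_C0_closed Rf /\
  (forall t, 0 < t ->
     is_derive S t (- beta * S t * I t) /\
     is_derive E t (beta * S t * I t - delta * E t) /\
     is_derive I t (delta * E t - gamma * I t) /\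
     is_derive Rf t (gamma * I t)) /\
  S 0 = S0 /\ E 0 = E0 /\ I 0 = I0 /\ Rf 0 = R0.

(* The SEIR system has two first integrals: the total population S + E + I + R
   and S exp((beta/gamma) R) have zero derivative on (0,oo) and, being
   continuous at 0, keep their initial values.  Since R' = gamma I, we get
   R'' + (gamma + delta) R' = gamma delta (E + I) = gamma delta (N - S - R),
   and the second integral expresses S through R. *)

From Stdlib Require Import Reals Lra.
From Coquelicot Require Import Coquelicot.
Open Scope R_scope.

Lemma is_derive_0_eq_lim_at_right (g : R -> R) (c : R) :
  (forall t, 0 < t -> is_derive g t 0) ->
  filterlim g (at_right 0) (locally c) ->
  forall t, 0 < t -> g t = c.
Proof.
  intros Hd Hlim t Ht.
  apply (filterlim_locally_unique g (F := at_right 0)); [|exact Hlim].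
  apply (filterlim_ext_loc (fun _ => g t)); [|apply filterlim_const].
  exists (mkposreal t Ht); intros s Hs Hs0.
  assert (Hst : s < t).
  { apply Rabs_def2 in Hs; unfold minus, plus, opp in Hs; simpl in Hs; lra. }
  symmetry; apply eq_is_derive; [intros u Hu; apply Hd; lra | exact Hst].
Qed.

Section FilterlimReal.

Context {T : Type} {F : (T -> Prop) -> Prop} {FF : Filter F}.

Lemma filterlim_Rplus (f g : T -> R) (a b : R) :
  filterlim f F (locally a) -> filterlim g F (locally b) ->
  filterlim (fun x => f x + g x) F (locally (a + b)).
Proof.
  intros Hf Hg; eapply filterlim_comp_2; [exact Hf | exact Hg | apply (filterlim_plus a b)].
Qed.

Lemma filterlim_Rmult (f g : T -> R) (a b : R) :
  filterlim f F (locally a) -> filterlim g F (locally b) ->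
  filterlim (fun x => f x * g x) F (locally (a * b)).
Proof.
  intros Hf Hg; eapply filterlim_comp_2; [exact Hf | exact Hg | apply (filterlim_mult a b)].
Qed.

Lemma filterlim_exp_scal (f : T -> R) (k a : R) :
  filterlim f F (locally a) ->
  filterlim (fun x => exp (k * f x)) F (locally (exp (k * a))).
Proof.
  intros Hf; apply (filterlim_comp _ _ _ f (fun y => exp (k * y)) _ (locally a)); [exact Hf|].
  apply (ex_derive_continuous (fun y => exp (k * y))); auto_derive; auto.
Qed.

End FilterlimReal.

Section SEIRFirstIntegrals.

Context {beta gamma delta S0 E0 I0 R0 : R} {S E I Rf : R -> R}.
Hypothesis Hsol : SEIR_solution beta gamma delta S0 E0 I0 R0 S E I Rf.

Lemma SEIR_population_conserved (t : R) :
  0 < t -> S t + E t + I t + Rf t = S0 + E0 + I0 + R0.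
Proof.
  destruct Hsol as [[_ CS] [[_ CE] [[_ CI] [[_ CR] [Hder [<- [<- [<- <-]]]]]]]].
  apply (is_derive_0_eq_lim_at_right (fun s => S s + E s + I s + Rf s)).
  - intros s Hs; destruct (Hder s Hs) as [dS [dE [dI dR]]].
    replace 0 with (- beta * S s * I s + (beta * S s * I s - delta * E s)
                    + (delta * E s - gamma * I s) + gamma * I s) by ring.
    repeat apply @is_derive_plus; assumption.
  - repeat apply filterlim_Rplus; assumption.
Qed.

Lemma SEIR_S_exp_R_conserved (t : R) :
  gamma <> 0 -> 0 < t ->
  S t * exp (beta / gamma * Rf t) = S0 * exp (beta / gamma * R0).
Proof.
  intros Hg; destruct Hsol as [[_ CS] [_ [_ [[_ CR] [Hder [<- [_ [_ <-]]]]]]]].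
  apply (is_derive_0_eq_lim_at_right (fun s => S s * exp (beta / gamma * Rf s))).
  - intros s Hs; destruct (Hder s Hs) as [dS [_ [_ dR]]].
    replace 0 with (- beta * S s * I s * exp (beta / gamma * Rf s)
                    + S s * (beta / gamma * (gamma * I s) * exp (beta / gamma * Rf s)))
      by (field; exact Hg).
    apply (is_derive_mult S (fun s => exp (beta / gamma * Rf s))); [exact dS | | intros; apply Rmult_comm].
    apply (is_derive_comp exp (fun s => beta / gamma * Rf s)).
    + rewrite Rmult_comm; apply is_derive_exp.
    + apply (is_derive_scal Rf); exact dR.
  - apply filterlim_Rmult; [exact CS|]; apply filterlim_exp_scal; exact CR.
Qed.

Lemma SEIR_S_of_R (t : R) :
  gamma <> 0 -> 0 < t ->
  S t = S0 * exp (beta / gamma * R0) * exp (- (beta / gamma) * Rf t).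
Proof.
  intros Hg Ht; rewrite <- (SEIR_S_exp_R_conserved t Hg Ht), Rmult_assoc, <- exp_plus.
  replace (beta / gamma * Rf t + - (beta / gamma) * Rf t) with 0 by ring.
  rewrite exp_0; ring.
Qed.

Lemma SEIR_is_derive_Derive_R (t : R) :
  0 < t -> is_derive (Derive Rf) t (gamma * (delta * E t - gamma * I t)).
Proof.
  destruct Hsol as [_ [_ [_ [_ [Hder _]]]]]; intros Ht.
  apply (is_derive_ext_loc (fun s => gamma * I s)).
  - exists (mkposreal t Ht); intros s Hs.
    apply Rabs_def2 in Hs; unfold minus, plus, opp in Hs; simpl in Hs.
    symmetry; apply is_derive_unique, Hder; lra.
  - apply (is_derive_scal I), Hder, Ht.
Qed.

End SEIRFirstIntegrals.

Theorem lemma1 (beta gamma delta S0 E0 I0 R0 : R) (S E I Rf : R -> R) :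
  0 < beta -> 0 < gamma -> 0 < delta ->
  0 < S0 + E0 + I0 + R0 ->
  (* (A1) *) 0 < I0 ->
  (* (A2) *) E0 > (gamma / delta) * I0 ->
  (* (A3) *) S0 > delta * E0 / (beta * I0) ->
  (* (A4) *) 0 <= R0 ->
  S0 + E0 + I0 + R0 > S0 * exp ((beta / gamma) * R0) + R0 ->
  SEIR_solution beta gamma delta S0 E0 I0 R0 S E I Rf ->
  (forall t, 0 < t -> 0 < S t) ->
  forall t, 0 < t ->
    ex_derive (Derive Rf) t /\
    Derive_n Rf 2 t + (gamma + delta) * Derive Rf t =
      gamma * delta *
        ((S0 + E0 + I0 + R0)
         - S0 * exp ((beta / gamma) * R0) * exp (- (beta / gamma) * Rf t)
         - Rf t).
Proof.
  intros _ Hg _ _ _ _ _ _ _ Hsol _ t Ht.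
  assert (Hg0 : gamma <> 0) by lra.
  pose proof (SEIR_is_derive_Derive_R Hsol t Ht) as HR''.
  split; [eexists; exact HR''|].
  change (Derive_n Rf 2 t) with (Derive (Derive Rf) t).
  assert (HR' : is_derive Rf t (gamma * I t)) by apply Hsol, Ht.
  rewrite (is_derive_unique _ _ _ HR''), (is_derive_unique _ _ _ HR').
  rewrite <- (SEIR_S_of_R Hsol t Hg0 Ht).
  rewrite <- (SEIR_population_conserved Hsol t Ht).
  ring.
Qed.
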